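(* There exist $n,k\in\mathbb{N}$ with $k\le n$ such that for every 2-coloring of the edges of $B_{n,k}$, there exists an induced monochromatic copy of $B_{4,2}$ in $B_{n,k}$; that is, there is a set $V'$ of vertices of $B_{n,k}$ such that the induced subgraph of $B_{n,k}$ on $V'$ is isomorphic to $B_{4,2}$ and all of its edges receive the same color.
   Context: For $n\in\mathbb{N}$, $[n]=\{1,\dots,n\}$, and for a set $X$, $\binom{X}{k}$ denotes the set of $k$-element subsets of $X$. For $k\le n$, $B_{n,k}$ is the bipartite graph with left vertex set $[n]$, right vertex set $\binom{[n]}{k}$, and edge set $\{(x,X)\in[n]\times\binom{[n]}{k} : x\in X\}$. For a graph $H=(V,E)$ and $V'\subseteq V$, the induced subgraph on $V'$ has vertex set $V'$ and edge set consisting of all edges of $H$ with both endpoints in $V'$. A 2-coloring of the edges is a map from the edge set to a 2-element set of colors. *)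

From mathcomp Require Import all_boot.
Set Implicit Arguments. Unset Strict Implicit. Unset Printing Implicit Defensive.

(* k-element subsets of [n] = 'I_n (elements 0..n-1 stand for 1..n) *)
Definition kset (n k : nat) := {X : {set 'I_n} | #|X| == k}.

(* Vertices of B_{n,k}: left part [n] (inl), right part binom([n],k) (inr). *)
Definition vert (n k : nat) := ('I_n + kset n k)%type.

Definition edge (n k : nat) := {p : 'I_n * kset n k | p.1 \in val p.2}.

Definition adj (n k : nat) (u v : vert n k) : bool :=
  match u, v with
  | inl x, inr X => x \in val X
  | inr X, inl x => x \in val X
  | _, _ => false
  end.

Definition induced_iso (m l n k : nat) (V' : {set vert n k})
  (f : vert m l -> vert n k) : Prop :=
  [/\ injective f, (forall v, f v \in V'),
      (forall w, w \in V' -> exists v, f v = w) &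
      (forall u v, adj u v = adj (f u) (f v))].

Definition monochromatic (n k : nat) (C : Type) (c : edge n k -> C)
  (V' : {set vert n k}) : Prop :=
  exists col : C, forall e : edge n k,
    inl (val e).1 \in V' -> inr (val e).2 \in V' -> c e = col.

(* Take k = 3. The three edges at a right vertex {x, y, z} carry two colours,
   so two of them, say those at x and y, agree; call z a witness of that
   colour for the pair {x, y}. No 16 points have at most four witnesses on
   every pair, since double counting ordered triples would then give
   16 * 15 * 14 <= 3 * 16 * 16 * 4. Hence Ramsey's theorem yields a large set
   with at least five witnesses on every pair and, applied again, four points
   a_1, ..., a_4 and a colour b with at least three witnesses of colour b on
   every pair; one of them, z_ij, lies outside {a_1, ..., a_4}. The a_i and the
   triples {a_i, a_j, z_ij} span an induced copy of B_{4,2} all of whose edges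
   have colour b. *)

From mathcomp Require Import all_boot.
From mathcomp Require Import zify.
Set Implicit Arguments. Unset Strict Implicit. Unset Printing Implicit Defensive.

Section Ramsey.

Variable T : finType.

Definition clique (r : rel T) (A : {set T}) := {in A &, forall x y, x != y -> r x y}.

Lemma clique0 (r : rel T) : clique r set0.
Proof. by move=> x y; rewrite in_set0. Qed.

Lemma clique_extend (r : rel T) (v : T) (S A : {set T}) :
    symmetric r -> v \in S -> A \subset S :\ v -> {in A, forall y, r v y} ->
    clique r A -> [/\ v |: A \subset S, #|v |: A| = #|A|.+1 & clique r (v |: A)].
Proof.
move=> rC vS sA rvA cA; have vNA : v \notin A by apply/negP => /(subsetP sA); rewrite !inE eqxx.
split; first by rewrite subUset sub1set vS (subset_trans sA (subD1set S v)).
  by rewrite cardsU1 vNA.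
move=> x y; rewrite !in_setU1 => /predU1P[->|xA] /predU1P[->|yA] xy.
- by rewrite eqxx in xy.
- exact: rvA.
- by rewrite rC; apply: rvA.
- exact: cA xy.
Qed.

End Ramsey.

Lemma ramsey (a b : nat) : exists N, forall (T : finType) (r : rel T), symmetric r ->
  forall S : {set T}, N <= #|S| ->
    (exists A : {set T}, [/\ A \subset S, #|A| = a & clique r A]) \/
    (exists A : {set T}, [/\ A \subset S, #|A| = b & clique [rel x y | ~~ r x y] A]).
Proof.
elim: a b => [|a IHa] b.
  by exists 0 => T r _ S _; left; exists set0; rewrite sub0set cards0; split=> //; apply: clique0.
elim: b => [|b IHb].
  by exists 0 => T r _ S _; right; exists set0; rewrite sub0set cards0; split=> //; apply: clique0.
have [N1 ramsey1] := IHa b.+1; have [N2 ramsey2] := IHb.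
exists (N1 + N2).+1 => T r rC S leNS.
have /card_gt0P[v vS] : 0 < #|S| by lia.
have nrC : symmetric [rel x y | ~~ r x y] by move=> x y /=; rewrite rC.
pose P := [set y | r v y].
have [leN1|leN2] : N1 <= #|(S :\ v) :&: P| \/ N2 <= #|(S :\ v) :\: P|.
  by have := cardsID P (S :\ v); have := cardsD1 v S; rewrite vS; lia.
- have sPS : (S :\ v) :&: P \subset S :\ v by apply: subsetIl.
  case: (ramsey1 T r rC _ leN1) => [[A [sA <- cA]]|[A [sA <- cA]]].
    left; exists (v |: A); apply: clique_extend => //; first exact: subset_trans sA sPS.
    by move=> y /(subsetP sA); rewrite !inE => /andP[_].
  by right; exists A; split=> //; apply: subset_trans sA (subset_trans sPS (subD1set S v)).
- have sPS : (S :\ v) :\: P \subset S :\ v by apply: subsetDl.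
  case: (ramsey2 T r rC _ leN2) => [[A [sA <- cA]]|[A [sA <- cA]]].
    by left; exists A; split=> //; apply: subset_trans sA (subset_trans sPS (subD1set S v)).
  right; exists (v |: A); apply: clique_extend => //; first exact: subset_trans sA sPS.
  by move=> y /(subsetP sA); rewrite !inE => /andP[].
Qed.

Section TripleCount.

Variables (T : finType) (S : {set T}).

Lemma sum_nat_of_bool (p : pred T) : \sum_(z in S) (p z : nat) = #|[set z in S | p z]|.
Proof.
rewrite -sum1_card big_mkcond [RHS]big_mkcond /=; apply: eq_bigr => z _.
by rewrite !inE; case: (z \in S); case: (p z).
Qed.

Lemma sum_distinct_triples :
  \sum_(x in S) \sum_(y in S) \sum_(z in S) ([&& x != y, x != z & y != z] : nat) =
  #|S| * ((#|S| - 1) * (#|S| - 2)).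
Proof.
rewrite -sum_nat_const; apply: eq_bigr => x xS.
have thirds y : y \in S ->
    \sum_(z in S) ([&& x != y, x != z & y != z] : nat) = (y != x) * (#|S| - 2).
  move=> yS; rewrite sum_nat_of_bool /=; have [<-|xy] := eqVneq x y.
    by apply/eqP; rewrite mul0n cards_eq0; apply/eqP/setP => z; rewrite !inE /= andbF.
  have -> : [set z in S | (x != z) && (y != z)] = S :\ x :\ y.
    by apply/setP => z; rewrite !inE ![_ == z]eq_sym andbC [_ && (z != y)]andbC andbA.
  have := cardsD1 y (S :\ x); have := cardsD1 x S; rewrite !inE eq_sym xy xS yS /=; lia.
rewrite (eq_bigr _ thirds) -big_distrl sum_nat_of_bool /=.
have -> : [set y in S | y != x] = S :\ x by apply/setP => y; rewrite !inE andbC.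
by have := cardsD1 x S; rewrite xS; lia.
Qed.

(* Every ordered triple of distinct points is counted, up to the order of its
   points, by one of the three sums obtained from [m] by permuting variables;
   each of these sums is the same triple sum after exchanging summations. *)
Lemma covered_triples_bound (m : T -> T -> T -> bool) (d : nat) :
    (forall x y z, x \in S -> y \in S -> z \in S -> [&& x != y, x != z & y != z] ->
       [|| m x y z, m x z y | m y z x]) ->
    (forall x y, x \in S -> y \in S -> #|[set z in S | m x y z]| <= d) ->
  #|S| * ((#|S| - 1) * (#|S| - 2)) <= 3 * (#|S| * (#|S| * d)).
Proof.
move=> cover bound.
pose M := \sum_(x in S) \sum_(y in S) \sum_(z in S) (m x y z : nat).
have leMd : M <= #|S| * (#|S| * d).
  rewrite -sum_nat_const; apply: leq_sum => x xS; rewrite -sum_nat_const.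
  by apply: leq_sum => y yS; rewrite sum_nat_of_bool bound.
have M_xzy : \sum_(x in S) \sum_(y in S) \sum_(z in S) (m x z y : nat) = M.
  by apply: eq_bigr => x _; apply: exchange_big.
have M_yzx : \sum_(x in S) \sum_(y in S) \sum_(z in S) (m y z x : nat) = M.
  by rewrite exchange_big; apply: eq_bigr => y _; apply: exchange_big.
rewrite -sum_distinct_triples.
apply: (@leq_trans (\sum_(x in S) \sum_(y in S) \sum_(z in S)
                     (m x y z + m x z y + m y z x))); last first.
  under eq_bigr => x _ do [under eq_bigr => y _ do rewrite !big_split; rewrite !big_split].
  by rewrite !big_split /= M_xzy M_yzx; lia.
apply: leq_sum => x xS; apply: leq_sum => y yS; apply: leq_sum => z zS.
case: (boolP [&& _, _ & _]) => // /(cover x y z xS yS zS).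
by case: (m x y z); case: (m x z y); case: (m y z x).
Qed.

End TripleCount.

(* [false] when (x, X) is not an edge of B_{n,k}. *)
Definition edge_color n k (c : edge n k -> bool) (X : {set 'I_n}) (x : 'I_n) : bool :=
  match (insub X : option (kset n k)) with
  | Some K => if (insub (x, K) : option (edge n k)) is Some e then c e else false
  | None => false
  end.

Lemma edge_colorE n k (c : edge n k -> bool) (e : edge n k) :
  edge_color c (val (val e).2) (val e).1 = c e.
Proof.
case: e => [[x K] xK]; rewrite /edge_color valK.
by rewrite (valK (exist _ (x, K) xK : edge n k)).
Qed.

Section Witnesses.

Variables (n : nat) (c : edge n 3 -> bool).

Definition witnesses (b : bool) (x y : 'I_n) : {set 'I_n} :=
  [set z | [&& x != y, x != z, y != z,
             edge_color c [set x; y; z] x == b & edge_color c [set x; y; z] y == b]].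

Definition all_witnesses (x y : 'I_n) := witnesses true x y :|: witnesses false x y.

Definition rich (x y : 'I_n) := 5 <= #|all_witnesses x y|.

Lemma witnessesC b x y : witnesses b x y = witnesses b y x.
Proof.
apply/setP => z; rewrite !inE (setUC [set y]) eq_sym.
by do 2!case: (_ != z); case: (_ == b); case: (_ == b).
Qed.

Lemma witnesses_diag b x : witnesses b x x = set0.
Proof. by apply/setP => z; rewrite !inE eqxx. Qed.

Lemma richC : symmetric rich.
Proof. by move=> x y; rewrite /rich /all_witnesses !(witnessesC _ x). Qed.

Lemma witnesses_cover x y z : [&& x != y, x != z & y != z] ->
  [|| z \in all_witnesses x y, y \in all_witnesses x z | x \in all_witnesses y z].
Proof.
case/and3P=> xy xz yz; rewrite !inE.
have -> : [set x; z; y] = [set x; y; z] by rewrite setUAC.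
have -> : [set y; z; x] = [set x; y; z] by rewrite setUC setUA.
rewrite xy xz yz ![_ == x]eq_sym ![z == y]eq_sym xy xz yz /=.
by case: (edge_color c _ x); case: (edge_color c _ y); case: (edge_color c _ z).
Qed.

Lemma poor_set_small (A : {set 'I_n}) : clique [rel x y | ~~ rich x y] A -> #|A| <= 15.
Proof.
move=> poorA; rewrite leqNgt; apply/negP => A16.
have poor_pairs x y : x \in A -> y \in A -> #|[set z in A | z \in all_witnesses x y]| <= 4.
  move=> xA yA; apply: leq_trans (subset_leq_card (subsetIr _ _)) _.
  case: (eqVneq x y) => [<-|xy]; first by rewrite /all_witnesses !witnesses_diag setU0 cards0.
  by have := poorA x y xA yA xy; rewrite /= /rich -leqNgt.
have := covered_triples_bound (fun x y z _ _ _ => @witnesses_cover x y z) poor_pairs.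
move: A16; set s := #|A|; nia.
Qed.

Lemma rich_witnesses x y :
  rich x y -> ~~ (3 <= #|witnesses true x y|) -> 3 <= #|witnesses false x y|.
Proof.
rewrite /rich /all_witnesses -ltnNge.
by have [+ _] := leq_card_setU (witnesses true x y) (witnesses false x y); lia.
Qed.

Lemma witness_outside b x y (A : {set 'I_n}) : x \in A -> y \in A -> x != y ->
  #|A| <= #|witnesses b x y| + 1 -> exists2 z, z \notin A & z \in witnesses b x y.
Proof.
move=> xA yA xy; case: (boolP (witnesses b x y \subset A)) => [sWA|/subsetPn[z]]; last by exists z.
have /subset_leq_card : witnesses b x y \subset A :\ x :\ y.
  apply/subsetP => z zW; rewrite !inE (subsetP sWA _ zW) andbT.
  by move: zW; rewrite inE => /and5P[_ xz yz _ _]; rewrite ![z == _]eq_sym xz yz.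
by have := cardsD1 x A; have := cardsD1 y (A :\ x); rewrite !inE xA yA eq_sym xy; lia.
Qed.

End Witnesses.

Section InducedCopy.

Variables (m l n k : nat) (a : 'I_m -> 'I_n) (g : kset m l -> kset n k).

Definition embed (v : vert m l) : vert n k :=
  match v with inl i => inl (a i) | inr Y => inr (g Y) end.

Lemma embed_induced_iso :
  injective a -> (forall Y, a @^-1: val (g Y) = val Y) -> induced_iso (embed @: setT) embed.
Proof.
move=> a_inj g_trace; split.
- case=> [i|Y] [j|Z] //= [].
    by move/a_inj->.
  by move=> gYZ; congr inr; apply: val_inj; rewrite -g_trace gYZ g_trace.
- by move=> v; apply: imset_f; rewrite inE.
- by move=> w /imsetP[v _ ->]; exists v.
- by case=> [i|Y] [j|Z] //=; rewrite -g_trace inE.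
Qed.

Lemma embed_monochromatic (C : Type) (c : edge n k -> C) (col : C) :
    (forall (e : edge n k) i Y, val e = (a i, g Y) -> c e = col) ->
  monochromatic c (embed @: setT).
Proof.
move=> c_col; exists col => -[[x X] xX] /=.
case/imsetP=> [[i|Y] _ //= [ex]]; case/imsetP=> [[j|Z] _ //= [eX]].
by apply: (c_col _ i Z) => /=; rewrite ex eX.
Qed.

End InducedCopy.

Section MonochromaticCopy.

Variables (n : nat) (c : edge n 3 -> bool) (b : bool).

Lemma colored_lift m (a : 'I_m -> 'I_n) : injective a ->
    (forall i j, i != j -> exists2 z, z \notin codom a & z \in witnesses c b (a i) (a j)) ->
  forall Y : kset m 2, exists X : kset n 3,
    (a @^-1: val X == val Y) && [forall i in val Y, edge_color c (val X) (a i) == b].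
Proof.
move=> a_inj wit [Y Y2] /=; have /cards2P[i [j [ij ->]]] := Y2.
have [z zNa] := wit i j ij; rewrite inE => /and5P[aij aiz ajz ci cj].
have azN h : (a h == z) = false by apply/negbTE; apply: contra zNa => /eqP<-; apply: codom_f.
have X3 : #|[set a i; a j; z]| == 3.
  by rewrite setUC cardsU1 cards2 !inE aij ![z == _]eq_sym (negbTE aiz) (negbTE ajz).
exists (exist (fun X : {set 'I_n} => #|X| == 3) _ X3); apply/andP; split.
  by apply/eqP/setP => h; rewrite !inE !(inj_eq a_inj) azN orbF.
by apply/forall_inP => h; rewrite !inE => /orP[]/eqP->.
Qed.

Lemma mono_copy_of_witnessed_set m (A : {set 'I_n}) : #|A| = m ->
    {in A &, forall x y, x != y -> m <= #|witnesses c b x y| + 1} ->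
  exists (V' : {set vert n 3}) (f : vert m 2 -> vert n 3),
    induced_iso V' f /\ monochromatic c V'.
Proof.
move=> Am wA.
pose a (i : 'I_m) := enum_val (cast_ord (esym Am) i).
have aA i : a i \in A by apply: enum_valP.
have a_inj : injective a by move=> i j /enum_val_inj/cast_ord_inj.
have wit i j : i != j -> exists2 z, z \notin codom a & z \in witnesses c b (a i) (a j).
  move=> ij; have aij : a i != a j by rewrite (inj_eq a_inj).
  have [|z zNA zW] := witness_outside (c := c) (b := b) (aA i) (aA j) aij.
    by rewrite Am wA.
  by exists z => //; apply: contra zNA => /codomP[h ->].
pose g Y := xchoose (colored_lift a_inj wit Y).
have g_trace Y : a @^-1: val (g Y) = val Y.
  by have /andP[/eqP] := xchooseP (colored_lift a_inj wit Y).
have g_col (Y : kset m 2) i : i \in val Y -> edge_color c (val (g Y)) (a i) = b.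
  by have /andP[_ /forall_inP col] := xchooseP (colored_lift a_inj wit Y); move/col/eqP.
exists (embed a g @: setT), (embed a g); split; first exact: embed_induced_iso.
apply: embed_monochromatic => e i Y eE; rewrite -(edge_colorE c e) eE /=.
apply: g_col; rewrite -g_trace inE; case: e eE => -[x X] /= xX [<- <-]; exact: xX.
Qed.

End MonochromaticCopy.

Theorem mainTheorem3 :
  exists n k : nat, k <= n /\
    forall c : edge n k -> bool,
      exists (V' : {set vert n k}) (f : vert 4 2 -> vert n k),
        induced_iso V' f /\ monochromatic c V'.
Proof.
have [N2 ramsey2] := ramsey 4 4.
have [N1 ramsey1] := ramsey 16 N2.
exists (N1 + 3), 3; split=> [|c]; first exact: leq_addl.
have leN1 : N1 <= #|[set: 'I_(N1 + 3)]| by rewrite cardsT card_ord leq_addr.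
have poorC : symmetric [rel x y | ~~ rich c x y] by move=> x y /=; rewrite richC.
have [[A [_ A16 /poor_set_small]]|[B [_ BN2 richB]]] := ramsey1 _ _ poorC _ leN1.
  by rewrite A16.
have trueC : symmetric [rel x y | 3 <= #|witnesses c true x y|].
  by move=> x y /=; rewrite witnessesC.
have [[A [_ A4 trueA]]|[A [sAB A4 falseA]]] := ramsey2 _ _ trueC B (eq_leq (esym BN2)).
  apply: (mono_copy_of_witnessed_set (b := true) A4) => x y xA yA xy.
  by rewrite addn1; apply: trueA.
apply: (mono_copy_of_witnessed_set (b := false) A4) => x y xA yA xy.
have /= := richB x y (subsetP sAB x xA) (subsetP sAB y yA) xy; rewrite negbK => rich_xy.
by rewrite addn1; apply: rich_witnesses rich_xy (falseA x y xA yA xy).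
Qed.
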